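(* Let $\mu$ be an Ising model on $\{-1,1\}^p$ with $\ell_1$-width at most $\gamma>0$ and $u\in[p]$. For every $\underline\theta_u\in\mathbb R^p$ with $\|\underline\theta_u\|_1\le\gamma$, \[ \mathcal L_u(\underline\theta_u)-\mathcal L_u(\underline\theta^*_u)-\langle\nabla\mathcal L_u(\underline\theta^*_u),\underline\theta_u-\underline\theta^*_u\rangle\ \ge\ \frac{e^{-3\gamma}}{2+2\gamma}\max_{v\ne u}|\theta_{u,v}-\theta^*_{u,v}|^2 . \]
   Context: Ising model: $\mu(\underline\sigma)\propto\exp\big(\sum_{\{u,v\}}\theta^*_{u,v}\sigma_u\sigma_v+\sum_u\theta^*_u\sigma_u\big)$ on $\{-1,1\}^p$, first sum over unordered pairs of distinct indices, symmetric couplings $\theta^*_{u,v}=\theta^*_{v,u}$; $\ell_1$-width at most $\gamma$ means $\sum_{v\ne u}|\theta^*_{u,v}|+|\theta^*_u|\le\gamma$ for all $u$. Local parameter vector $\underline\theta_u=(\theta_u,(\theta_{u,v})_{v\ne u})\in\mathbb R^p$ with true value $\underline\theta^*_u=(\theta^*_u,(\theta^*_{u,v})_{v\ne u})$; local energy $E_u(\underline\sigma;\underline\theta_u)=\sigma_u(\theta_u+\sum_{v\ne u}\theta_{u,v}\sigma_v)$; interaction screening loss $\mathcal L_u(\underline\theta_u)=\mathbb E_\mu[e^{-E_u(\underline\sigma;\underline\theta_u)}]$. *)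

From HB Require Import structures.
From mathcomp Require Import all_boot all_order all_algebra.
From mathcomp Require Import all_classical all_reals all_analysis.
Set Implicit Arguments. Unset Strict Implicit. Unset Printing Implicit Defensive.
Import Order.TTheory GRing.Theory Num.Theory.
Import numFieldNormedType.Exports.
Local Open Scope ring_scope.

Section Ising.
Variables (R : realType) (p : nat).

(* Configurations sigma in {-1,1}^p, encoded by booleans (true = +1). *)
Definition config := {ffun 'I_p -> bool}.
Definition spin (x : config) (i : 'I_p) : R := if x i then 1 else -1.

Definition ising_energy (theta : 'I_p -> 'I_p -> R) (h : 'I_p -> R)
  (x : config) : R :=
  \sum_(i : 'I_p) \sum_(j : 'I_p | (i < j)%N) theta i j * spin x i * spin x j
  + \sum_(i : 'I_p) h i * spin x i.

Definition ising_Z (theta : 'I_p -> 'I_p -> R) (h : 'I_p -> R) : R := \sum_(x : config) expR (ising_energy theta h x).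

Definition ising_mu (theta : 'I_p -> 'I_p -> R) (h : 'I_p -> R) (x : config) : R :=
  expR (ising_energy theta h x) / ising_Z theta h.

Definition l1_width_le (theta : 'I_p -> 'I_p -> R) (h : 'I_p -> R) (gamma : R) : Prop :=
  forall u : 'I_p, \sum_(v : 'I_p | v != u) `|theta u v| + `|h u| <= gamma.

(* Local parameter vector theta_u in R^p: coordinate u holds the field
   component theta_u, coordinate v <> u holds the coupling theta_{u,v}. *)
Definition theta_star (theta : 'I_p -> 'I_p -> R) (h : 'I_p -> R) (u : 'I_p) : 'rV[R]_p :=
  \row_(w < p) (if w == u then h u else theta u w).

Definition local_energy (u : 'I_p) (x : config) (t : 'rV[R]_p) : R :=
  spin x u * (t ord0 u + \sum_(v : 'I_p | v != u) t ord0 v * spin x v).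

Definition ISO_loss (theta : 'I_p -> 'I_p -> R) (h : 'I_p -> R) (u : 'I_p) (t : 'rV[R]_p) : R :=
  \sum_(x : config) ising_mu theta h x * expR (- local_energy u x t).

Definition grad_inner (f : 'rV[R]_p -> R) (a d : 'rV[R]_p) : R :=
  \sum_(w : 'I_p) d ord0 w * 'D_(delta_mx ord0 w) f a.

Definition l1norm (t : 'rV[R]_p) : R := \sum_(w : 'I_p) `|t ord0 w|.

End Ising.

From HB Require Import structures.
From mathcomp Require Import all_boot all_order all_algebra.
From mathcomp Require Import all_classical all_reals all_analysis.
From mathcomp Require Import ring lra.
Import Order.TTheory GRing.Theory Num.Theory.
Import numFieldNormedType.Exports.
Local Open Scope ring_scope.
Set Implicit Arguments. Unset Strict Implicit. Unset Printing Implicit Defensive.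

(* The local energy E_x(t) is linear in t, so the Bregman divergence of L_u at
   theta*_u is the mu-average of e^(-E_x(theta*_u)) (e^(-z) - 1 + z) with
   z = E_x(t - theta*_u).  As |E_x(theta*_u)| <= gamma, |z| <= 2 gamma and
   e^(-z) - 1 + z >= z^2 / (2 + |z|), it is at least
   e^(-gamma) / (2 + 2 gamma) E_mu[z^2].  Finally E_mu[z^2] >=
   e^(-2 gamma) (t_v - theta*_v)^2 for every v <> u: flipping sigma_v changes
   the Gibbs weight by a factor at most e^(2 gamma), so sigma_v keeps a
   nondegenerate conditional law and z cannot concentrate. *)
Section ExpBounds.
Variable R : realType.

Lemma ler_ge0_derive (f df : R -> R) (z : R) :
  (forall s, is_derive s (1 : R) f (df s)) -> (forall s, 0 <= s -> 0 <= df s) ->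
  0 <= z -> f 0 <= f z.
Proof.
move=> f_df df_ge0 z_ge0.
have [c c0z E] : exists2 c, c \in `[0, z]%R & f z - f 0 = df c * (z - 0).
  apply: MVT_segment => //.
  apply/continuous_subspaceT => r.
  by apply/differentiable_continuous/derivable1_diffP; have [] := f_df r.
by rewrite -subr_ge0 E mulr_ge0 ?subr0 // df_ge0 //; move: c0z; rewrite in_itv /= => /andP[].
Qed.

Lemma expRN_mul2D_ge (z : R) : 0 <= z -> 2 - z <= expR (- z) * (2 + z).
Proof.
move=> z_ge0; pose f (s : R) := expR (- s) * (2 + s) + s.
suff : f 0 <= f z by rewrite /f oppr0 expR0 mul1r addr0; lra.
apply: (@ler_ge0_derive _ (fun s => 1 - expR (- s) * (1 + s))) => // [s|s s_ge0].
  apply: is_derive_eq; rewrite /= !add0r -![_ *: _]/(_ * _); lra.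
rewrite subr_ge0 (le_trans (ler_wpM2l (expR_ge0 _) (expR_ge1Dx s))) //.
by rewrite expRN mulVf // gt_eqF // expR_gt0.
Qed.

Lemma expR_ge1DxDsqr (y : R) : 0 <= y -> 1 + y + y ^+ 2 / 2 <= expR y.
Proof.
move=> y_ge0; pose f (s : R) := expR s - s - s ^+ 2 / 2.
suff : f 0 <= f y by rewrite /f expR0 expr0n /= mul0r !subr0; lra.
apply: (@ler_ge0_derive _ (fun s => expR s - 1 - s)) => // [s|s s_ge0].
  apply: is_derive_eq; rewrite /= !scaler0 add0r -![_ *: _]/(_ * _); lra.
by have := expR_ge1Dx s; lra.
Qed.

Lemma sqr_div2Dnorm_le_expRN (z : R) : z ^+ 2 / (2 + `|z|) <= expR (- z) - 1 + z.
Proof.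
have [z_ge0|z_lt0] := leP 0 z.
  rewrite ger0_norm // ler_pdivrMr; last lra.
  by have := expRN_mul2D_ge z_ge0; nra.
rewrite ltr0_norm // ler_pdivrMr; last lra.
have := @expR_ge1DxDsqr (- z) ltac:(lra).
by rewrite sqrrN; nra.
Qed.

Lemma expRN_bregman_ge (gamma a z : R) : 0 < gamma ->
  `|a| <= gamma -> `|z| <= 2 * gamma ->
  expR (- gamma) / (2 + 2 * gamma) * z ^+ 2 <= expR (- a) * (expR (- z) - 1 + z).
Proof.
move=> gamma_gt0 a_le z_le.
have ea : expR (- gamma) <= expR (- a).
  by rewrite ler_expR lerN2 (le_trans (ler_norm _)).
have q : z ^+ 2 / (2 + 2 * gamma) <= z ^+ 2 / (2 + `|z|).
  by rewrite ler_wpM2l ?sqr_ge0 // lef_pV2 ?posrE ?lerD2l //; clear -gamma_gt0; lra.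
rewrite mulrAC -mulrA ler_pM ?expR_ge0 ?divr_ge0 ?sqr_ge0 //.
  by clear -gamma_gt0; lra.
exact: le_trans q (sqr_div2Dnorm_le_expRN z).
Qed.

End ExpBounds.

Lemma deriveE_line (R : realType) (V W : normedModType R) (f : V -> W) (a v : V) :
  'D_v f a = 'D_(1 : R) (fun k : R => f (k *: v + a)) 0.
Proof.
rewrite /derive /=; f_equal; f_equal; apply: funext => k /=.
rewrite scale0r add0r addr0; congr (_ *: (f (_ *: _ + _) - _)).
by rewrite -[k%:A]/(k * 1) mulr1.
Qed.

Lemma is_derive_finsum (R : realType) (V W : normedModType R) (I : finType)
    (F : I -> V -> W) (dF : I -> W) (x v : V) :
  (forall i, is_derive x v (F i) (dF i)) ->
  is_derive x v (fun y => \sum_i F i y) (\sum_i dF i).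
Proof.
move=> F_dF; rewrite -(fct_sumE _ _ F).
by elim/big_ind2 : _ => // *; [exact: is_derive_cst | exact: is_deriveD].
Qed.

Section LocalEnergy.
Variables (R : realType) (p : nat) (u : 'I_p).
Implicit Types (x : config p) (t : 'rV[R]_p).

Definition energy_coef x (w : 'I_p) : R :=
  spin R x u * (if w == u then 1 else spin R x w).

Lemma local_energyE x t : local_energy u x t = \sum_w t ord0 w * energy_coef x w.
Proof.
rewrite /local_energy [RHS](bigD1 u) //= /energy_coef eqxx mulr1 mulrDr mulrC.
congr (_ + _); rewrite mulr_sumr; apply: eq_bigr => w /negbTE ->; exact: mulrCA.
Qed.

Lemma local_energyDZ x (k : R) t s :
  local_energy u x (k *: t + s) = k * local_energy u x t + local_energy u x s.
Proof.
rewrite !local_energyE mulr_sumr -big_split /=; apply: eq_bigr => w _.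
by rewrite !mxE mulrDl mulrA.
Qed.

Lemma local_energy_delta x (w : 'I_p) :
  local_energy u x (delta_mx ord0 w : 'rV[R]_p) = energy_coef x w.
Proof.
rewrite local_energyE (bigD1 w) //= big1 ?addr0; first by rewrite mxE !eqxx mul1r.
by move=> j /negbTE jw; rewrite mxE jw andbF mul0r.
Qed.

Lemma normr_spin x (i : 'I_p) : `|spin R x i| = 1.
Proof. by rewrite /spin; case: (x i); rewrite ?normrN normr1. Qed.

Lemma normr_local_energy_le x t : `|local_energy u x t| <= l1norm t.
Proof.
rewrite local_energyE /l1norm; apply: le_trans (ler_norm_sum _ _ _) _.
apply: ler_sum => w _; rewrite normrM /energy_coef normrM normr_spin mul1r.
by case: (w == u); rewrite ?normr1 ?normr_spin mulr1.
Qed.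

End LocalEnergy.

Section ISOLossDerivative.
Variables (R : realType) (p : nat) (theta : 'I_p -> 'I_p -> R) (h : 'I_p -> R).
Variable u : 'I_p.
Local Notation mu := (ising_mu theta h).
Local Notation E := (local_energy u).

Lemma derive_ISO_loss (a v : 'rV[R]_p) :
  'D_v (ISO_loss theta h u) a = \sum_x mu x * (expR (- E x a) * - E x v).
Proof.
rewrite deriveE_line; apply: derive_val.
have -> : (fun k : R => ISO_loss theta h u (k *: v + a)) =
    (fun k => \sum_x mu x * expR (- (k * E x v + E x a))).
  by apply: funext => k; apply: eq_bigr => x _; rewrite local_energyDZ.
apply: is_derive_finsum => x; apply: is_derive_eq.
by rewrite /= mul0r add0r scaler0 add0r addr0 -[_%:A]/(_ * 1) mulr1 -[_ *: _]/(_ * _).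
Qed.

Lemma grad_inner_ISO_loss (a d : 'rV[R]_p) :
  grad_inner (ISO_loss theta h u) a d =
  \sum_x mu x * (expR (- E x a) * - E x d).
Proof.
rewrite /grad_inner; under eq_bigr do rewrite derive_ISO_loss mulr_sumr.
rewrite exchange_big /=; apply: eq_bigr => x _.
rewrite [E x d]local_energyE -sumrN !mulr_sumr; apply: eq_bigr => w _.
rewrite local_energy_delta; ring.
Qed.

Lemma ISO_loss_bregmanE (a t : 'rV[R]_p) :
  ISO_loss theta h u t - ISO_loss theta h u a - grad_inner (ISO_loss theta h u) a (t - a) =
  \sum_x mu x * (expR (- E x a) * (expR (- E x (t - a)) - 1 + E x (t - a))).
Proof.
rewrite grad_inner_ISO_loss /ISO_loss -!sumrB; apply: eq_bigr => x _.
have {1}-> : t = 1 *: (t - a) + a by rewrite scale1r subrK.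
rewrite local_energyDZ mul1r opprD expRD; ring.
Qed.

End ISOLossDerivative.

Section SpinFlip.
Variables (R : realType) (p : nat).
Implicit Types x : config p.

Definition flip (v : 'I_p) x : config p :=
  [ffun i => if i == v then ~~ x i else x i].

Lemma flipK (v : 'I_p) : involutive (flip v).
Proof. by move=> x; apply/ffunP => i; rewrite !ffunE; case: (i == v); rewrite ?negbK. Qed.

Lemma spin_flip (v : 'I_p) x (i : 'I_p) :
  spin R (flip v x) i = if i == v then - spin R x i else spin R x i.
Proof. by rewrite /spin ffunE; case: (i == v); case: (x i); rewrite /= ?opprK. Qed.

Lemma spin_sqr x (i : 'I_p) : spin R x i ^+ 2 = 1.
Proof. by rewrite /spin; case: (x i); rewrite ?sqrrN expr1n. Qed.

Lemma sum_pairs_incident (g : 'I_p -> 'I_p -> R) (v : 'I_p) :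
  \sum_(i : 'I_p) \sum_(j : 'I_p | (i < j)%N) (g i j * (i == v)%:R + g i j * (j == v)%:R) =
  \sum_(j : 'I_p | (v < j)%N) g v j + \sum_(i : 'I_p | (i < v)%N) g i v.
Proof.
under eq_bigr do rewrite big_split /=.
rewrite big_split /=; congr (_ + _).
  rewrite (bigD1 v) //= [X in _ + X]big1 ?addr0.
    by apply: eq_bigr => j _; rewrite eqxx mulr1.
  by move=> i /negbTE iv; apply: big1 => j _; rewrite iv mulr0.
under eq_bigr do rewrite big_mkcond /=.
rewrite exchange_big /= (bigD1 v) //= [X in _ + X]big1 ?addr0.
  by rewrite [RHS]big_mkcond /=; apply: eq_bigr => i _; rewrite eqxx mulr1.
by move=> j /negbTE jv; apply: big1 => i _; case: ifP => _; rewrite ?jv ?mulr0.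
Qed.

Lemma normr_pair_flip_le (c a b : R) (fa fb : bool) : `|a| = 1 -> `|b| = 1 ->
  `|c * a * b - c * (if fa then - a else a) * (if fb then - b else b)| <=
  2 * `|c| * fa%:R + 2 * `|c| * fb%:R.
Proof.
move=> a1 b1; have cab : `|c * a * b| = `|c| by rewrite !normrM a1 b1 !mulr1.
have c_ge0 := normr_ge0 c.
have twice : `|c * a * b + c * a * b| <= 2 * `|c|.
  by rewrite (le_trans (ler_normD _ _)) // cab; lra.
case: fa; case: fb => /=.
- by rewrite (_ : c * - a * - b = c * a * b) ?subrr ?normr0; [lra | ring].
- by rewrite (_ : c * - a * b = - (c * a * b)) ?opprK; [lra | ring].
- by rewrite (_ : c * a * - b = - (c * a * b)) ?opprK; [lra | ring].
- by rewrite subrr normr0; lra.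
Qed.

End SpinFlip.

Section GibbsFlip.
Variables (R : realType) (p : nat) (theta : 'I_p -> 'I_p -> R) (h : 'I_p -> R).
Hypothesis theta_sym : forall u v : 'I_p, theta u v = theta v u.
Local Notation mu := (ising_mu theta h).
Implicit Types x : config p.

Lemma normr_ising_energy_flip_le (v : 'I_p) x :
  `|ising_energy theta h x - ising_energy theta h (flip v x)| <=
  2 * (\sum_(j | j != v) `|theta v j| + `|h v|).
Proof.
have field : `|\sum_i (h i * spin R x i - h i * spin R (flip v x) i)| <= 2 * `|h v|.
  rewrite (bigD1 v) //= big1 ?addr0 => [|i /negbTE iv]; last by rewrite spin_flip iv subrr.
  rewrite spin_flip eqxx mulrN opprK.
  by rewrite -mulr2n normrMn normrM normr_spin mulr1 mulr2n; lra.
rewrite /ising_energy opprD addrACA -!sumrB mulrDr.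
apply: le_trans (ler_normD _ _) _; apply: lerD => //.
under eq_bigr do rewrite -sumrB.
apply: le_trans (ler_norm_sum _ _ _) _.
apply: (@le_trans _ _ (\sum_(i : 'I_p) \sum_(j : 'I_p | (i < j)%N)
    (2 * `|theta i j| * (i == v)%:R + 2 * `|theta i j| * (j == v)%:R))).
  apply: ler_sum => i _; apply: le_trans (ler_norm_sum _ _ _) _.
  by apply: ler_sum => j _; rewrite !spin_flip normr_pair_flip_le ?normr_spin.
rewrite sum_pairs_incident le_eqVlt; apply/orP; left; apply/eqP.
rewrite big_mkcond [X in _ + X]big_mkcond [in RHS]big_mkcond /= -big_split mulr_sumr.
apply: eq_bigr => j _; rewrite theta_sym -(inj_eq val_inj) /=.
by have [vj|jv|vj] := ltngtP v j; rewrite /= ?addr0 ?add0r ?mulr0.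
Qed.

Lemma ising_Z_gt0 : 0 < ising_Z theta h.
Proof.
rewrite /ising_Z (bigD1 [ffun=> true]) //= ltr_pwDl ?expR_gt0 //.
by apply: sumr_ge0 => x _; exact: expR_ge0.
Qed.

Lemma ising_mu_ge0 x : 0 <= mu x.
Proof. by rewrite /ising_mu divr_ge0 ?expR_ge0 // ltW // ising_Z_gt0. Qed.

Lemma ising_mu_sum1 : \sum_x mu x = 1.
Proof. by rewrite /ising_mu -mulr_suml divff // gt_eqF // ising_Z_gt0. Qed.

Variable gamma : R.
Hypothesis width : l1_width_le theta h gamma.

Lemma ising_mu_flip_ge (v : 'I_p) x : expR (- (2 * gamma)) * mu x <= mu (flip v x).
Proof.
rewrite /ising_mu mulrA ler_pM2r ?invr_gt0 ?ising_Z_gt0 //.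
rewrite -expRD ler_expR.
have := normr_ising_energy_flip_le v x; have := width v.
by move=> w /ler_normlP [? ?]; lra.
Qed.

Lemma weighted_sqrDB_ge (a b k A D : R) :
  0 <= a -> 0 <= b -> k * a <= b -> k * b <= a -> 0 <= k -> k <= 1 ->
  k * (a + b) * D ^+ 2 <= a * (A + D) ^+ 2 + b * (A - D) ^+ 2.
Proof.
move=> a_ge0 b_ge0 kab kba k_ge0 k_le1.
have := sqr_ge0 D; have := sqr_ge0 A.
have [ab|ba] := leP a b.
  have -> : a * (A + D) ^+ 2 + b * (A - D) ^+ 2 =
    2 * a * (A ^+ 2 + D ^+ 2) + (b - a) * (A - D) ^+ 2 by ring.
  have : 0 <= (b - a) * (A - D) ^+ 2 by rewrite mulr_ge0 ?sqr_ge0 ?subr_ge0.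
  have : k * (a + b) <= 2 * a by nra.
  nra.
have -> : a * (A + D) ^+ 2 + b * (A - D) ^+ 2 =
  2 * b * (A ^+ 2 + D ^+ 2) + (a - b) * (A + D) ^+ 2 by ring.
have : 0 <= (a - b) * (A + D) ^+ 2 by rewrite mulr_ge0 ?sqr_ge0 // subr_ge0 ltW.
have : k * (a + b) <= 2 * b by nra.
nra.
Qed.

(* Conditionally on the other spins, [sigma_v] takes both values with
   probabilities within a factor [e^(2 gamma)] of each other, so the energy
   [A + d_v sigma_v] cannot concentrate: pair [x] with [flip v x]. *)
Lemma expect_local_energy_sqr_ge (u v : 'I_p) (d : 'rV[R]_p) : 0 <= gamma -> v != u ->
  expR (- (2 * gamma)) * d ord0 v ^+ 2 <= \sum_x mu x * local_energy u x d ^+ 2.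
Proof.
move=> gamma_ge0 vu; set k := expR (- (2 * gamma)).
pose A x := d ord0 u + \sum_(w | (w != u) && (w != v)) d ord0 w * spin R x w.
have energy_sqr x : local_energy u x d ^+ 2 = (A x + d ord0 v * spin R x v) ^+ 2.
  rewrite /local_energy exprMn spin_sqr mul1r (bigD1 v) //=; congr (_ ^+ 2).
  rewrite /A; lra.
have A_flip x : A (flip v x) = A x.
  by rewrite /A; congr (_ + _); apply: eq_bigr => w /andP[_ /negbTE wv]; rewrite spin_flip wv.
have sum_flip (F : config p -> R) : \sum_x F (flip v x) = \sum_x F x.
  by rewrite [RHS](reindex_inj (inv_inj (flipK v))).
set S := \sum_x _.
have S_flip : S = \sum_x mu (flip v x) * (A x - d ord0 v * spin R x v) ^+ 2.
  rewrite /S -sum_flip; apply: eq_bigr => x _.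
  by rewrite energy_sqr A_flip spin_flip eqxx mulrN.
have k_ge0 : 0 <= k by exact: expR_ge0.
have k_le1 : k <= 1 by rewrite expR_le1; lra.
suff : 2 * (k * d ord0 v ^+ 2) <= S + S by lra.
rewrite {2}S_flip /S -big_split /=.
apply: (@le_trans _ _ (\sum_x k * (mu x + mu (flip v x)) * (d ord0 v * spin R x v) ^+ 2)).
  under eq_bigr do rewrite exprMn spin_sqr mulr1.
  by rewrite -mulr_suml -mulr_sumr big_split /= sum_flip ising_mu_sum1; lra.
apply: ler_sum => x _; rewrite energy_sqr weighted_sqrDB_ge ?ising_mu_ge0 //.
  exact: ising_mu_flip_ge.
by have := ising_mu_flip_ge v (flip v x); rewrite flipK.
Qed.

End GibbsFlip.

Lemma l1norm_theta_star (R : realType) (p : nat) (theta : 'I_p -> 'I_p -> R)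
    (h : 'I_p -> R) (gamma : R) (u : 'I_p) :
  l1_width_le theta h gamma -> l1norm (theta_star theta h u) <= gamma.
Proof.
move=> width; apply: le_trans (width u).
rewrite /l1norm (bigD1 u) //= mxE eqxx addrC lerD2r le_eqVlt; apply/orP; left.
by apply/eqP/eq_bigr => w /negbTE wu; rewrite mxE wu.
Qed.

Lemma l1normB (R : realType) (p : nat) (a b : 'rV[R]_p) :
  l1norm (a - b) <= l1norm a + l1norm b.
Proof. by rewrite /l1norm -big_split ler_sum // => w _; rewrite !mxE ler_normB. Qed.

Theorem mainTheorem8 (R : realType) (p : nat)
  (theta : 'I_p -> 'I_p -> R) (h : 'I_p -> R) (gamma : R)
  (theta_sym : forall u v : 'I_p, theta u v = theta v u)
  (gamma_pos : 0 < gamma)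
  (width : l1_width_le theta h gamma)
  (u : 'I_p) (t : 'rV[R]_p)
  (t_l1 : l1norm t <= gamma) :
  let ts := theta_star theta h u in
  let L := ISO_loss theta h u in
  L t - L ts - grad_inner L ts (t - ts)
    >= expR (- (3 * gamma)) / (2 + 2 * gamma)
       * \big[Num.max/0]_(v : 'I_p | v != u) (`|t ord0 v - ts ord0 v| ^+ 2).
Proof.
cbv zeta; rewrite ISO_loss_bregmanE; set ts := theta_star _ _ _; set d := t - ts.
have ts_l1 : l1norm ts <= gamma by exact: l1norm_theta_star.
have d_l1 : l1norm d <= 2 * gamma by rewrite (le_trans (l1normB _ _)) //; lra.
pose c := expR (- gamma) / (2 + 2 * gamma).
have c_ge0 : 0 <= c by rewrite divr_ge0 ?expR_ge0 //; lra.
have -> : expR (- (3 * gamma)) / (2 + 2 * gamma) = c * expR (- (2 * gamma)).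
  by rewrite /c mulrAC -expRD; congr (expR _ / _); lra.
apply: (@le_trans _ _ (c * \sum_x ising_mu theta h x * local_energy u x d ^+ 2)).
  rewrite -mulrA ler_wpM2l // mulrC -ler_pdivlMr ?expR_gt0 //.
  apply: bigmax_le => [|v vu].
    by rewrite divr_ge0 ?expR_ge0 ?sumr_ge0 // => x _; rewrite mulr_ge0 ?ising_mu_ge0 ?sqr_ge0.
  have -> : t ord0 v - ts ord0 v = d ord0 v by rewrite !mxE.
  rewrite ler_pdivlMr ?expR_gt0 // mulrC real_normK ?num_real //.
  by apply: expect_local_energy_sqr_ge => //; exact: ltW.
rewrite mulr_sumr ler_sum // => x _; rewrite mulrCA ler_wpM2l ?ising_mu_ge0 //.
by apply: expRN_bregman_ge; rewrite ?(le_trans (normr_local_energy_le _ _ _)).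
Qed.
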